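(* Let $d\ge1$, $\delta>0$, and let $F:[-\delta,1+\delta]^d\to\mathbb{R}$ be convex, continuous, and continuously differentiable on $(-\delta,1+\delta)^d$. Then for every $\epsilon>0$ there exist $n\ge1$, $t>0$, $\boldsymbol{W}\in\mathbb{R}^{n\times d}$ and $\boldsymbol{a}\in\mathbb{R}^n$ such that $$\sup_{\boldsymbol{x}\in[0,1]^d}\big\|\nabla F(\boldsymbol{x})-\boldsymbol{W}^\top\mathrm{softmax}\big(t(\boldsymbol{W}\boldsymbol{x}+\boldsymbol{a})\big)\big\|<\epsilon .$$ Each such approximator $\boldsymbol{x}\mapsto\boldsymbol{W}^\top\mathrm{softmax}(t(\boldsymbol{W}\boldsymbol{x}+\boldsymbol{a}))$ is the gradient of the convex function $\boldsymbol{x}\mapsto\mathrm{LSE}_t(\{\boldsymbol{w}_i^\top\boldsymbol{x}+a_i\}_{i=1}^n)$, where $\boldsymbol{w}_i^\top$ is the $i$th row of $\boldsymbol{W}$.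
   Context: $\mathrm{softmax}(\boldsymbol{z})_i=e^{z_i}/\sum_j e^{z_j}$ for $\boldsymbol{z}\in\mathbb{R}^n$. For $t>0$ and a finite set $\mathcal{U}\subset\mathbb{R}$, $\mathrm{LSE}_t(\mathcal{U})=\frac1t\log\sum_{u\in\mathcal{U}}e^{tu}$. $\|\cdot\|$ is the Euclidean norm. *)

From HB Require Import structures.
From mathcomp Require Import all_boot all_order all_algebra.
From mathcomp Require Import all_classical all_reals all_analysis.
Set Implicit Arguments. Unset Strict Implicit. Unset Printing Implicit Defensive.
Import Order.TTheory GRing.Theory Num.Theory.
Import numFieldNormedType.Exports.
Local Open Scope classical_set_scope.
Local Open Scope ring_scope.

Section Defs.
Variable R : realType.

Definition enorm (n : nat) (v : 'rV[R]_n) : R :=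
  Num.sqrt (\sum_(i < n) v ord0 i ^+ 2).

Definition softmax (n : nat) (z : 'rV[R]_n) : 'rV[R]_n :=
  \row_i (expR (z ord0 i) / \sum_(j < n) expR (z ord0 j)).

Definition LSE (n : nat) (t : R) (u : 'rV[R]_n) : R :=
  t^-1 * ln (\sum_(i < n) expR (t * u ord0 i)).

Definition grad (d : nat) (f : 'rV[R]_d -> R) (x : 'rV[R]_d) : 'rV[R]_d :=
  \row_i ('D_(delta_mx ord0 i) f x).

Definition ccube (d : nat) (lo hi : R) : set 'rV[R]_d :=
  [set x | forall i, lo <= x ord0 i <= hi].
Definition ocube (d : nat) (lo hi : R) : set 'rV[R]_d :=
  [set x | forall i, lo < x ord0 i < hi].

Definition convex_on (d : nat) (A : set 'rV[R]_d) (f : 'rV[R]_d -> R) : Prop :=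
  forall x y, A x -> A y -> forall l : R, 0 <= l <= 1 ->
    f (l *: x + (1 - l) *: y) <= l * f x + (1 - l) * f y.

Definition softmax_approx (n d : nat) (t : R) (W : 'M[R]_(n, d)) (a : 'rV[R]_n)
  (x : 'rV[R]_d) : 'rV[R]_d :=
  softmax (t *: (x *m W^T + a)) *m W.

Definition lse_fun (n d : nat) (t : R) (W : 'M[R]_(n, d)) (a : 'rV[R]_n)
  (x : 'rV[R]_d) : R :=
  LSE t (x *m W^T + a).

End Defs.

From HB Require Import structures.
From mathcomp Require Import all_boot all_order all_algebra.
From mathcomp Require Import all_classical all_reals all_analysis.
From mathcomp Require Import ring lra finmap.
Import Order.TTheory GRing.Theory Num.Theory.
Import numFieldNormedType.Exports.
Local Open Scope classical_set_scope.
Local Open Scope ring_scope.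

(* Fix a finite net p_1, ..., p_n of [0,1]^d for grad F and let w_j.x + a_j be
   the tangent plane of F at p_j.  By convexity the gap F(x) - (w_j.x + a_j) is
   nonnegative, and the net point closest to x (in gradient) has gap at most g/2;
   so at large t the softmax gives weight at most 1/(1 + t g/2) to every plane
   with gap above g.  Conversely a small gap forces grad F(p_j) close to
   grad F(x): comparing the tangent planes at p_j and at x +- h e_k bounds
   |d_k F(x) - d_k F(p_j)| by gap/h plus the oscillation of grad F on an h-ball.
   The second part is a direct computation; convexity of LSE_t follows from
   convexity of exp after normalising each sum of exponentials by its total. *)

Section RowVectors.
Variables (R : realType) (d : nat).
Implicit Types (u v w : 'rV[R]_d).

Definition dotr u v : R := \sum_i u ord0 i * v ord0 i.

Lemma dotrDr u v w : dotr u (v + w) = dotr u v + dotr u w.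
Proof. by rewrite /dotr -big_split; apply: eq_bigr => i _; rewrite !mxE mulrDr. Qed.

Lemma dotrNr u v : dotr u (- v) = - dotr u v.
Proof. by rewrite /dotr -sumrN; apply: eq_bigr => i _; rewrite !mxE mulrN. Qed.

Lemma dotrBr u v w : dotr u (v - w) = dotr u v - dotr u w.
Proof. by rewrite dotrDr dotrNr. Qed.

Lemma dotrBl u v w : dotr (u - v) w = dotr u w - dotr v w.
Proof. by rewrite /dotr -sumrB; apply: eq_bigr => i _; rewrite !mxE mulrDl mulNr. Qed.

Lemma dotr_delta u (r : R) k : dotr u (r *: delta_mx ord0 k) = r * u ord0 k.
Proof.
rewrite /dotr (bigD1 k) //= big1 => [|i /negbTE ik]; last by rewrite !mxE ik andbF mulr0 mulr0.
by rewrite !mxE !eqxx mulr1 addr0 mulrC.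
Qed.

Lemma normr_coord_le v i : `|v ord0 i| <= `|v|.
Proof.
have /mapP[j _ ->] : `|v ord0 i| \in [seq `|v x.1 x.2| | x : 'I_1 * 'I_d].
  by apply/mapP; exists (ord0, i) => //=; rewrite mem_enum.
by rewrite [ `|v| ]mx_normrE; apply/bigmax_geP; right => /=; exists j.
Qed.

Lemma normr_rV_le v (r : R) : 0 <= r -> (forall i, `|v ord0 i| <= r) -> `|v| <= r.
Proof.
move=> r0 vr; rewrite [ `|v| ]mx_normrE; apply/bigmax_leP; split => // -[i j] _ /=.
by rewrite (ord1 i); exact: vr.
Qed.

Lemma normr_dotr_le u v : `|dotr u v| <= d%:R * (`|u| * `|v|).
Proof.
have -> : d%:R * (`|u| * `|v|) = \sum_(i < d) `|u| * `|v|.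
  by rewrite sumr_const card_ord mulr_natl.
apply: le_trans (ler_norm_sum _ _ _) _.
apply: ler_sum => i _; rewrite normrM.
exact: ler_pM (normr_ge0 _) (normr_ge0 _) (normr_coord_le u i) (normr_coord_le v i).
Qed.

Lemma enorm_le_normr v : enorm v <= d%:R * `|v|.
Proof.
have S0 : 0 <= \sum_i `|v ord0 i| by exact: sumr_ge0.
apply: (@le_trans _ _ (\sum_i `|v ord0 i|)).
  rewrite /enorm -(ger0_norm S0) -sqrtr_sqr ler_sqrt ?sqr_ge0 //.
  rewrite expr2 mulr_suml; apply: ler_sum => i _.
  by rewrite -real_normK ?num_real // expr2 ler_wpM2l // (bigD1 i) //= lerDl sumr_ge0.
have -> : d%:R * `|v| = \sum_(i < d) `|v| by rewrite sumr_const card_ord mulr_natl.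
by apply: ler_sum => i _; exact: normr_coord_le.
Qed.

End RowVectors.
Arguments dotr {R d}.
Arguments normr_coord_le {R d}.
Arguments normr_rV_le {R d}.
Arguments normr_dotr_le {R d}.
Arguments enorm_le_normr {R d}.

Section FirstOrder.
Variables (R : realType) (d : nat) (A : set 'rV[R]_d) (F : 'rV[R]_d -> R).

Lemma deriveE_dotr_grad p v : differentiable F p -> 'D_v F p = dotr (grad F p) v.
Proof.
move=> dF; rewrite deriveE // {1}(row_sum_delta v) linear_sum.
by apply: eq_bigr => i _; rewrite linearZ /= -deriveE // /grad !mxE mulrC.
Qed.

Lemma convex_on_derive_le p y : convex_on A F -> A p -> A y ->
  derivable F p (y - p) -> F p + 'D_(y - p) F p <= F y.
Proof.
move=> cvxF Ap Ay dF.
suff : 'D_(y - p) F p <= F y - F p by lra.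
set g := fun h : R => h^-1 *: ((F \o shift p) (h *: (y - p)) - F p).
have gr : g @ 0^'+ --> lim (g @ 0^').
  move=> B /dF /nbhs_ballP [_ /posnumP[e] eB].
  by exists e%:num => //= z ez; rewrite lt_def => /andP [z0 _]; apply: eB.
apply: (cvgr_to_le gr); near=> h.
have h0 : 0 < h by near: h; exact: nbhs_right_gt.
have h1 : h <= 1 by near: h; apply: nbhs_right_ltW; exact: ltr01.
have cvx_h : F (h *: y + (1 - h) *: p) <= h * F y + (1 - h) * F p.
  by apply: cvxF => //; rewrite h1 ltW.
rewrite /g /= /shift -[leRHS](mulKf (lt0r_neq0 h0)) /GRing.scale /= ler_pM2l ?invr_gt0 //.
suff -> : h *: (y - p) + p = h *: y + (1 - h) *: p by lra.
by rewrite scalerBr scalerBl scale1r addrA addrAC.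
Unshelve. all: by end_near.
Qed.

Lemma convex_on_tangent_le p y : convex_on A F -> A p -> A y -> differentiable F p ->
  F p + dotr (grad F p) (y - p) <= F y.
Proof.
move=> cvxF Ap Ay dF; rewrite -deriveE_dotr_grad //.
exact: convex_on_derive_le p y cvxF Ap Ay (diff_derivable dF).
Qed.

End FirstOrder.
Arguments convex_on_tangent_le {R d A F p y}.

Section CompactContinuity.
Variables (R : realType) (V W : normedModType R) (K : set V) (f : V -> W).
Hypotheses (cK : compact K) (cf : {in K, continuous f}).

Lemma continuous_ball e x : 0 < e -> K x ->
  exists2 r : R, 0 < r & forall y, `|x - y| < r -> `|f x - f y| < e.
Proof.
move=> e0 Kx; have /nbhs_ballP[r /= r0 Br] := cf x (mem_set Kx) _ (nbhsx_ballx (f x) e e0).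
by exists r => // y xy; have := Br y; rewrite -!ball_normE; apply.
Qed.

Lemma compact_unif_continuous e : 0 < e ->
  exists2 h : R, 0 < h & forall x y, K x -> `|x - y| < h -> `|f x - f y| < e.
Proof.
move=> e0; have e20 : 0 < e / 2 by rewrite divr_gt0.
have /nbhs_ballP[h /= h0 Bh] : \forall h \near 0^'+,
    forall x, K x -> forall y, `|x - y| < h -> `|f x - f y| < e.
  apply: ((compact_near_coveringP K).1 cK R (0^'+)
    (fun h x => forall y, `|x - y| < h -> `|f x - f y| < e)) => x Kx.
  have [r r0 Br] := continuous_ball _ _ e20 Kx.
  near=> x' h => y /= x'y.
  have xx' : `|x - x'| < r / 2.
    by near: x'; apply/nbhs_ballP; exists (r / 2) => /=; [rewrite divr_gt0 | rewrite -ball_normE].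
  have hr : h < r / 2 by near: h; apply: nbhs_right_lt; rewrite divr_gt0.
  have xy : `|x - y| < r by apply: le_lt_trans (ler_distD x' x y) _; lra.
  have xx'r : `|x - x'| < r by lra.
  have := Br _ xy; have := Br _ xx'r.
  move: (ler_distD (f x) (f x') (f y)); rewrite [X in _ <= X + _]distrC; lra.
have h2 : 0 < h / 2 by rewrite divr_gt0.
have hh : ball 0 h (h / 2) by rewrite -ball_normE /= sub0r normrN gtr0_norm //; lra.
by exists (h / 2) => // x y Kx xy; exact: (Bh _ hh h2 x Kx y xy).
Unshelve. all: by end_near.
Qed.

Lemma compact_finite_net e : 0 < e -> exists (n : nat) (p : 'I_n -> V),
  (forall j, K (p j)) /\ forall x, K x -> exists j, `|f x - f (p j)| < e.
Proof.
move=> e0; pose D := [set q : V * R | [/\ K q.1, 0 < q.2 &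
  forall y, `|q.1 - y| < q.2 -> `|f q.1 - f y| < e]].
have := cK; rewrite compact_cover => /(_ _ D (fun q => ball q.1 q.2)) [].
- by move=> q _; exact: ball_open.
- move=> x Kx; have [r r0 Br] := continuous_ball _ _ e0 Kx.
  by exists (x, r) => //; exact: ballxx.
move=> D' D'D cover.
pose s : seq (V * R) := D'; exists (size s), (fun j => (nth (0, 0) s j).1).
have sD (j : 'I_(size s)) : D (nth (0, 0) s j).
  by apply/set_mem/D'D; change (nth (0, 0) s j \in s); rewrite mem_nth.
split => [j|x Kx]; first by have [] := sD j.
have [q qD' xq] := cover x Kx.
have [_ _ Bq] : D q by apply/set_mem/D'D.
have qi : (index q s < size s)%N by rewrite index_mem.
exists (Ordinal qi); rewrite /= nth_index // distrC; apply: Bq.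
by rewrite -ball_normE in xq.
Qed.

Lemma compact_image_bounded : exists M : R, forall x, K x -> `|f x| <= M.
Proof.
have /compact_bounded[M [_ HM]] := continuous_compact (continuous_in_subspaceT cf) cK.
by exists (M + 1) => x Kx; apply: HM; [rewrite ltrDl | exists x].
Qed.

End CompactContinuity.
Arguments compact_unif_continuous {R V W K f}.
Arguments compact_finite_net {R V W K f}.
Arguments compact_image_bounded {R V W K f}.

Section Softmax.
Variables (R : realType) (n : nat).
Implicit Types (z : 'rV[R]_n) (j : 'I_n).

Lemma softmax_ge0 z j : 0 <= softmax z ord0 j.
Proof. by rewrite mxE divr_ge0 ?expR_ge0 // sumr_ge0 // => i _; exact: expR_ge0. Qed.

Lemma softmax_le_expR z j j0 : softmax z ord0 j <= expR (z ord0 j - z ord0 j0).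
Proof.
have S_ge : expR (z ord0 j0) <= \sum_i expR (z ord0 i).
  by rewrite (bigD1 j0) //= lerDl sumr_ge0 // => i _; exact: expR_ge0.
rewrite mxE expRD expRN ler_wpM2l ?expR_ge0 // lef_pV2 ?posrE ?expR_gt0 //.
exact: lt_le_trans (expR_gt0 _) S_ge.
Qed.

Lemma softmax_sum1 z : (0 < n)%N -> \sum_j softmax z ord0 j = 1.
Proof.
move=> n0; under eq_bigr do rewrite mxE.
rewrite -mulr_suml divff // gt_eqF // (bigD1 (Ordinal n0)) //=.
by rewrite ltr_pwDl ?expR_gt0 // sumr_ge0 // => i _; exact: expR_ge0.
Qed.

Lemma expRN_le_inv (y : R) : 0 <= y -> expR (- y) <= (1 + y)^-1.
Proof. by move=> y0; rewrite expRN lef_pV2 ?posrE ?expR_gt0 ?expR_ge1Dx //; lra. Qed.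

Lemma softmax_scale_le z (t g : R) j j0 : 0 <= t -> 0 <= g ->
  z ord0 j + g <= z ord0 j0 -> softmax (t *: z) ord0 j <= (1 + t * g)^-1.
Proof.
move=> t0 g0 zj; apply: le_trans (softmax_le_expR _ j j0) _.
apply: le_trans (expRN_le_inv _ (mulr_ge0 t0 g0)); rewrite ler_expR !mxE.
by have := ler_wpM2l t0 zj; rewrite mulrDr; lra.
Qed.

Lemma normr_avg_le (pi v : 'I_n -> R) (A B : R) :
  (forall j, 0 <= pi j) -> \sum_j pi j = 1 ->
  (forall j, pi j * `|v j| <= pi j * A + B) ->
  `|\sum_j pi j * v j| <= A + n%:R * B.
Proof.
move=> pi0 pi1 piv; apply: le_trans (ler_norm_sum _ _ _) _.
have term j : `|pi j * v j| <= pi j * A + B by rewrite normrM ger0_norm.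
apply: le_trans (ler_sum _ (fun j _ => term j)) _.
by rewrite big_split /= -mulr_suml pi1 mul1r sumr_const card_ord mulr_natl.
Qed.

Lemma exists_temperature (g L b : R) : 0 < g -> 0 <= L -> 0 < b ->
  exists2 t : R, 0 < t & n%:R * ((1 + t * g)^-1 * L) <= b.
Proof.
move=> g0 L0 b0; have nLb : 0 <= n%:R * L / b by rewrite divr_ge0 ?mulr_ge0 // ltW.
exists ((1 + n%:R * L / b) / g); first by rewrite divr_gt0 //; lra.
rewrite divfK ?gt_eqF // (mulrC _ L) mulrA ler_pdivrMr; last by lra.
by rewrite !mulrDr mulr1 mulrCA divff ?gt_eqF // mulr1; lra.
Qed.

End Softmax.
Arguments softmax_scale_le {R n}.
Arguments exists_temperature {R} n {g L b}.

Section Cubes.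
Variables (R : realType) (d : nat).
Implicit Types (x y : 'rV[R]_d).

Lemma ocube_ccube (lo hi : R) x : ocube lo hi x -> ccube lo hi x.
Proof. by move=> xO i; have /andP[? ?] := xO i; rewrite !ltW. Qed.

Lemma ccube01_ball_ocube (r : R) x y : ccube 0 1 x -> `|y - x| < r ->
  ocube (- r) (1 + r) y.
Proof.
move=> xC yx i; have /andP[x0 x1] := xC i.
have := le_lt_trans (normr_coord_le (y - x) i) yx.
by rewrite !mxE ltr_norml => /andP[? ?]; apply/andP; split; lra.
Qed.

Lemma ccube01_ocube (r : R) x : 0 < r -> ccube 0 1 x -> ocube (- r) (1 + r) x.
Proof. by move=> r0 xC; apply: ccube01_ball_ocube xC _; rewrite subrr normr0. Qed.

Lemma ccube01_dist_le1 x y : ccube 0 1 x -> ccube 0 1 y -> `|x - y| <= 1.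
Proof.
move=> xC yC; apply: normr_rV_le => // i; have /andP[? ?] := xC i.
by have /andP[? ?] := yC i; rewrite !mxE ler_norml; apply/andP; split; lra.
Qed.

Lemma ccube01_compact : compact (ccube (R:=R) (d:=d) 0 1).
Proof.
have -> : ccube (R:=R) (d:=d) 0 1 = [set v | forall i, `[(0:R), 1]%classic (v ord0 i)].
  by apply/seteqP; split => v vC i; have := vC i; rewrite /= in_itv.
by apply: (@rV_compact _ _ (fun=> `[(0:R), 1]%classic)) => i; exact: segment_compact.
Qed.

End Cubes.
Arguments ocube_ccube {R d lo hi x}.
Arguments ccube01_ocube {R d r x}.

Section TangentNetwork.
Variables (R : realType) (d n : nat) (F : 'rV[R]_d -> R) (p : 'I_n -> 'rV[R]_d).

Definition tangent (q x : 'rV[R]_d) : R := F q + dotr (grad F q) (x - q).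

Definition tangent_weights : 'M[R]_(n, d) := \matrix_(j, i) grad F (p j) ord0 i.

Definition tangent_bias : 'rV[R]_n := \row_j (F (p j) - dotr (grad F (p j)) (p j)).

Lemma tangent_affine x :
  x *m tangent_weights^T + tangent_bias = \row_j tangent (p j) x.
Proof.
apply/rowP => j; rewrite !mxE /tangent dotrBr addrCA; congr (_ + (_ - _)).
by apply: eq_bigr => i _; rewrite !mxE mulrC.
Qed.

Lemma softmax_approx_tangentE t x k :
  softmax_approx t tangent_weights tangent_bias x ord0 k =
  \sum_j softmax (t *: \row_j tangent (p j) x) ord0 j * grad F (p j) ord0 k.
Proof.
rewrite /softmax_approx tangent_affine mxE.
by apply: eq_bigr => j _; rewrite [tangent_weights _ _]mxE.
Qed.

End TangentNetwork.
Arguments tangent {R d}.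
Arguments tangent_weights {R d n}.
Arguments tangent_bias {R d n}.

Section ConvexGradient.
Variables (R : realType) (d : nat) (delta : R) (F : 'rV[R]_d -> R).
Hypotheses (delta_gt0 : 0 < delta)
  (F_convex : convex_on (ccube (- delta) (1 + delta)) F)
  (F_diff : forall x, ocube (- delta) (1 + delta) x -> differentiable F x).

Local Notation O := (ocube (d:=d) (- delta) (1 + delta)).
Local Notation C := (ccube (d:=d) (- delta) (1 + delta)).
Local Notation G := (grad F).
Implicit Types (p q x y : 'rV[R]_d).

Lemma tangent_le p y : O p -> C y -> tangent F p y <= F y.
Proof.
move=> Op Cy.
exact: convex_on_tangent_le F_convex (ocube_ccube Op) Cy (F_diff _ Op).
Qed.

(* Add up the tangent inequalities at [y] (evaluated at [x]) and at [p] (evaluated at [y]). *)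
Lemma dotr_grad_sub_le_gap p y x : O p -> O y -> C x ->
  dotr (G p - G y) (y - x) <= F x - tangent F p x.
Proof.
move=> Op Oy Cx.
have := tangent_le y x Oy Cx; have := tangent_le p y Op (ocube_ccube Oy).
rewrite /tangent.
have -> : y - p = (y - x) + (x - p) by rewrite addrA subrK.
have -> : x - y = - (y - x) by rewrite opprB.
by rewrite dotrDr dotrNr dotrBl; lra.
Qed.

Lemma grad_coord_close p x k (h e g : R) : 0 < h -> C x -> O p ->
  (forall y, `|y - x| <= h -> O y /\ `|G y - G x| < e) ->
  F x - tangent F p x <= g -> `|G x ord0 k - G p ord0 k| <= g / h + e.
Proof.
move=> h0 Cx Op near_x gap.
have step r : `|r| <= h ->
    r * (G p ord0 k - G (x + r *: delta_mx ord0 k) ord0 k) <= g /\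
    `|G (x + r *: delta_mx ord0 k) ord0 k - G x ord0 k| < e.
  move=> rh; set y := x + r *: delta_mx ord0 k.
  have yx : y - x = r *: delta_mx ord0 k by rewrite /y addrAC subrr add0r.
  have [Oy Gyx] : O y /\ `|G y - G x| < e.
    apply: near_x; rewrite yx; apply: normr_rV_le (ltW h0) _ => i.
    by rewrite !mxE /=; case: (i == k); rewrite ?mulr1 ?mulr0 ?normr0 // ltW.
  split; last by apply: le_lt_trans _ Gyx; have := normr_coord_le (G y - G x) k; rewrite !mxE.
  apply: le_trans gap; have := dotr_grad_sub_le_gap p y x Op Oy Cx.
  by rewrite yx dotr_delta !mxE.
have hh : `|h| <= h by rewrite ger0_norm ?lexx // ltW.
have hN : `|- h| <= h by rewrite normrN.
have [up Gup] := step h hh; have [down Gdown] := step (- h) hN.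
rewrite mulNr -mulrN opprB in down.
have up' : G p ord0 k - G (x + h *: delta_mx ord0 k) ord0 k <= g / h.
  by rewrite ler_pdivlMr // mulrC.
have down' : G (x + - h *: delta_mx ord0 k) ord0 k - G p ord0 k <= g / h.
  by rewrite ler_pdivlMr // mulrC.
move: Gup Gdown; rewrite ler_norml !ltr_norml => /andP[? ?] /andP[? ?].
by apply/andP; split; lra.
Qed.

Lemma tangent_gap_le q x (e : R) : ccube 0 1 x -> ccube 0 1 q ->
  `|G x - G q| < e -> F x - tangent F q x <= d%:R * e.
Proof.
move=> xC qC Gxq.
have Ox := ccube01_ocube delta_gt0 xC; have Oq := ccube01_ocube delta_gt0 qC.
have := tangent_le x q Ox (ocube_ccube Oq); rewrite /tangent.
have -> : q - x = - (x - q) by rewrite opprB.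
have : dotr (G x - G q) (x - q) <= d%:R * e.
  apply: le_trans (ler_norm _) (le_trans (normr_dotr_le _ _) _).
  rewrite ler_wpM2l // -[leRHS]mulr1.
  by apply: ler_pM => //; [exact: ltW | exact: ccube01_dist_le1].
by rewrite dotrBl dotrNr; lra.
Qed.


Lemma softmax_tangent_coord_err n (p : 'I_n -> 'rV[R]_d) x j0 k (t h e g L : R) :
  0 <= t -> 0 < h -> 0 < g ->
  (forall j, ccube 0 1 (p j)) -> ccube 0 1 x ->
  (forall y, `|y - x| <= h -> O y /\ `|G y - G x| < e) ->
  F x - tangent F (p j0) x <= g / 2 ->
  (forall j, `|G x ord0 k - G (p j) ord0 k| <= L) ->
  `|(G x - softmax_approx t (tangent_weights F p) (tangent_bias F p) x) ord0 k|
    <= g / h + e + n%:R * ((1 + t * (g / 2))^-1 * L).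
Proof.
move=> t0 h0 g0 pC xC near_x gap0 GL.
have n0 : (0 < n)%N := leq_ltn_trans (leq0n j0) (ltn_ord j0).
have [_ e0] : O x /\ `|G x - G x| < e by apply: near_x; rewrite subrr normr0 ltW.
rewrite subrr normr0 in e0.
have B0 : 0 <= (1 + t * (g / 2))^-1 * L.
  rewrite mulr_ge0 ?invr_ge0 ?(le_trans (normr_ge0 _) (GL j0)) //.
  by have := mulr_ge0 t0 (ltW (divr_gt0 g0 (ltr0Sn _ 1))); lra.
set z := \row_j tangent F (p j) x.
pose pi j := softmax (t *: z) ord0 j.
have pi0 j : 0 <= pi j by exact: softmax_ge0.
rewrite mxE [X in _ + X]mxE softmax_approx_tangentE -/z.
have -> : G x ord0 k - \sum_j pi j * G (p j) ord0 k =
          \sum_j pi j * (G x ord0 k - G (p j) ord0 k).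
  by under [RHS]eq_bigr do rewrite mulrBr; rewrite sumrB -mulr_suml softmax_sum1 // mul1r.
apply: normr_avg_le => // [|j]; first exact: softmax_sum1.
have [close|far] := lerP (F x - tangent F (p j) x) g.
- have Ox := ccube01_ocube delta_gt0 xC.
  have := grad_coord_close _ _ k h e g h0 (ocube_ccube Ox)
    (ccube01_ocube delta_gt0 (pC j)) near_x close.
  by move=> /(ler_wpM2l (pi0 j)); lra.
- have : pi j <= (1 + t * (g / 2))^-1.
    apply: (softmax_scale_le _ _ _ j j0 t0); first by rewrite ltW // divr_gt0.
    by rewrite !mxE; lra.
  move=> /(ler_pM (pi0 j) (normr_ge0 _)) /(_ (GL j)).
  have : 0 <= pi j * (g / h + e) by rewrite mulr_ge0 // addr_ge0 ?ltW ?divr_gt0.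
  lra.
Qed.

Hypothesis G_cont : {in O, continuous G}.

Lemma grad_cont_ccube01 : {in ccube 0 1, continuous G}.
Proof. by move=> x /set_mem xC; apply/G_cont/mem_set/ccube01_ocube. Qed.

Lemma grad_unif_near (e : R) : 0 < e -> exists2 h : R, 0 < h &
  forall x y, ccube 0 1 x -> `|y - x| <= h -> O y /\ `|G y - G x| < e.
Proof.
move=> e0; have [h' h'0 unifG] := compact_unif_continuous
  (ccube01_compact R d) grad_cont_ccube01 e e0.
have hpos : 0 < Num.min h' delta by rewrite lt_min h'0.
exists (Num.min h' delta / 2) => [|x y xC yx]; first by rewrite divr_gt0.
have yx' : `|y - x| < Num.min h' delta by apply: le_lt_trans yx _; lra.
move: yx'; rewrite lt_min => /andP[yxh yxd].
by split; [exact: ccube01_ball_ocube xC yxd | rewrite distrC; apply: unifG; rewrite // distrC].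
Qed.

Lemma grad_softmax_approx (eps : R) : 0 < eps ->
  exists (n : nat) (t : R) (W : 'M[R]_(n, d)) (a : 'rV[R]_n),
    (0 < n)%N /\ 0 < t /\
    exists2 s : R, s < eps &
      forall x, ccube 0 1 x -> enorm (G x - softmax_approx t W a x) <= s.
Proof.
(* [b] bounds each coordinate of the error, as the sum of three terms below
   [b / 3]; dividing by [d.+1] rather than [d] also covers [d = 0]. *)
move=> eps0; set b := eps / (2 * d.+1%:R).
have b0 : 0 < b by rewrite divr_gt0 // mulr_gt0.
have [h h0 near_x] := grad_unif_near (b / 3) (divr_gt0 b0 (ltr0Sn _ 2)).
set g := h * b / 3.
have g0 : 0 < g by rewrite !divr_gt0 ?mulr_gt0.
have [M GM] := compact_image_bounded (ccube01_compact R d) grad_cont_ccube01.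
have [n [p [pC pnet]]] := compact_finite_net (ccube01_compact R d)
  grad_cont_ccube01 (g / (2 * d.+1%:R)) (divr_gt0 g0 (mulr_gt0 (ltr0Sn _ 1) (ltr0Sn _ d))).
have C0 : ccube 0 1 (0 : 'rV[R]_d) by move=> i; rewrite mxE lexx ler01.
have [j0 _] := pnet 0 C0; have n0 : (0 < n)%N := leq_ltn_trans (leq0n j0) (ltn_ord j0).
have M0 : 0 <= 2 * M by rewrite mulr_ge0 // (le_trans (normr_ge0 _) (GM 0 C0)).
have [t t0 tb] := exists_temperature n (divr_gt0 g0 (ltr0Sn _ 1)) M0 (divr_gt0 b0 (ltr0Sn _ 2)).
exists n, t, (tangent_weights F p), (tangent_bias F p); do 2 split => //.
exists (eps / 2) => [|x xC]; first lra.
apply: le_trans (enorm_le_normr _) _.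
suff err : `|G x - softmax_approx t (tangent_weights F p) (tangent_bias F p) x| <= b.
  apply: le_trans (ler_wpM2l (ler0n _ _) err) _; rewrite /b mulrA ler_pdivrMr ?mulr_gt0 //.
  have -> : eps / 2 * (2 * d.+1%:R) = d.+1%:R * eps by field.
  by rewrite ler_pM2r // ler_nat.
apply: normr_rV_le (ltW b0) _ => k.
have [j0' Gj0'] := pnet x xC.
apply: le_trans (softmax_tangent_coord_err n p x j0' k t h (b / 3) g (2 * M)
  (ltW t0) h0 g0 pC xC (fun y => near_x x y xC) _ _) _.
- apply: le_trans (tangent_gap_le _ _ _ xC (pC j0') Gj0') _.
  have -> : d%:R * (g / (2 * d.+1%:R)) = g / 2 * (d%:R / d.+1%:R) by field.
  by rewrite ger_pMr ?(divr_gt0 g0) // ler_pdivrMr // mul1r ler_nat.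
- move=> j; apply: le_trans (ler_normB _ _) _.
  have -> : 2 * M = M + M by ring.
  by apply: lerD; apply: le_trans (normr_coord_le _ k) _; apply: GM.
- have -> : g / h = b / 3 by rewrite /g; field; rewrite gt_eqF.
  lra.
Qed.

End ConvexGradient.

Section DirectionalDerivatives.
Variables (R : realType) (V : normedModType R).

Lemma is_derive_affine (f : V -> R) (x v : V) (l : R) :
  (forall h, f (h *: v + x) - f x = h * l) -> is_derive x v f l.
Proof.
move=> fl.
have const : \forall h \near 0^', h^-1 *: ((f \o shift x) (h *: v) - f x) = l.
  near=> h; rewrite /= /shift fl /GRing.scale /= mulKf //.
  by near: h; exact: nbhs_dnbhs_neq.
by apply: DeriveDef; [exact: (is_cvg_near_cst l) | exact: lim_near_cst].
Unshelve. all: by end_near.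
Qed.

Lemma is_derive_comp_real (f : V -> R) (g : R -> R) x v df dg :
  differentiable f x -> is_derive (f x) 1 g dg -> is_derive x v f df ->
  is_derive x v (g \o f) (dg * df).
Proof.
move=> dfx dgx fdf.
have dg' : differentiable g (f x) by apply/derivable1_diffP; exact: ex_derive.
apply: DeriveDef; first exact/diff_derivable/differentiable_comp.
have Ef : 'D_v f x = df by case: fdf.
have Eg : 'D_1 g (f x) = dg by case: dgx.
have dgf := differentiable_comp dfx dg'.
rewrite deriveE // diff_comp //= -(deriveE _ dfx) Ef.
have -> : 'd g (f x) df = df *: 'd g (f x) 1 by rewrite -linearZ /= /GRing.scale /= mulr1.
by rewrite -deriveE // Eg mulrC.
Qed.

End DirectionalDerivatives.

Section LogSumExp.
Variables (R : realType) (n d : nat) (t : R) (W : 'M[R]_(n, d)) (a : 'rV[R]_n).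
Hypotheses (n_gt0 : (0 < n)%N) (t_gt0 : 0 < t).

Definition logit (i : 'I_n) (x : 'rV[R]_d) : R := (x *m W^T + a) ord0 i.

Definition expsum (x : 'rV[R]_d) : R := \sum_i expR (t * logit i x).

Lemma lse_funE : lse_fun t W a = fun x => t^-1 * ln (expsum x).
Proof. by []. Qed.

Lemma logit_shift i h v x : logit i (h *: v + x) - logit i x = h * (v *m W^T) ord0 i.
Proof. by rewrite /logit mulmxDl -scalemxAl !mxE; ring. Qed.

Lemma logit_convex_comb i (l : R) x y :
  logit i (l *: x + (1 - l) *: y) = l * logit i x + (1 - l) * logit i y.
Proof. by rewrite /logit !mulmxDl -!scalemxAl !mxE; ring. Qed.

Lemma differentiable_scaled_logit i x : differentiable (fun y => t * logit i y) x.
Proof.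
have -> : logit i = \sum_(k < d) ((fun y : 'rV[R]_d => y ord0 k) * cst (W i k)) + cst (a ord0 i).
  apply/funext => y; rewrite /logit fct_sumE /= !mxE; congr (_ + _).
  by apply: eq_bigr => k _; rewrite !mxE.
apply: (@differentiableM _ _ (cst t)); first exact: differentiable_cst.
apply: differentiableD; last exact: differentiable_cst.
apply: differentiable_sum => k; apply: differentiableM; last exact: differentiable_cst.
exact: differentiable_coord.
Qed.

Lemma expsum_gt0 x : 0 < expsum x.
Proof.
rewrite /expsum (bigD1 (Ordinal n_gt0)) //= ltr_pwDl ?expR_gt0 //.
by rewrite sumr_ge0 // => i _; exact: expR_ge0.
Qed.

Lemma expsumE : expsum = \sum_(i < n) (expR \o (fun y => t * logit i y)).
Proof. by rewrite fct_sumE. Qed.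

Lemma differentiable_expsum x : differentiable expsum x.
Proof.
rewrite expsumE; apply: differentiable_sum => i.
apply: differentiable_comp; first exact: differentiable_scaled_logit.
by apply/derivable1_diffP; exact: derivable_expR.
Qed.

Lemma is_derive_expsum x v :
  is_derive x v expsum (\sum_i expR (t * logit i x) * (t * (v *m W^T) ord0 i)).
Proof.
rewrite expsumE; apply: is_derive_sum => i.
apply: is_derive_comp_real; first exact: differentiable_scaled_logit.
by apply: is_derive_affine => h; rewrite -mulrBr logit_shift; ring.
Qed.

Lemma lse_fun_comp : lse_fun t W a = cst t^-1 * ((@ln R) \o expsum).
Proof. by apply/funext. Qed.

Lemma differentiable_lse x : differentiable (lse_fun t W a) x.
Proof.
rewrite lse_fun_comp; apply: differentiableM; first exact: differentiable_cst.
apply: differentiable_comp; first exact: differentiable_expsum.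
by apply/derivable1_diffP/ex_derive/is_derive1_ln/expsum_gt0.
Qed.

Lemma is_derive_lse x v : is_derive x v (lse_fun t W a)
  (t^-1 * ((expsum x)^-1 * \sum_i expR (t * logit i x) * (t * (v *m W^T) ord0 i))).
Proof.
rewrite lse_fun_comp.
have dlnS : is_derive x v ((@ln R) \o expsum)
    ((expsum x)^-1 * \sum_i expR (t * logit i x) * (t * (v *m W^T) ord0 i)).
  apply: is_derive_comp_real; [exact: differentiable_expsum | | exact: is_derive_expsum].
  exact/is_derive1_ln/expsum_gt0.
apply: is_derive_eq (is_deriveM (is_derive_cst t^-1 x v) dlnS) _.
by rewrite /GRing.scale /=; ring.
Qed.

Lemma grad_lse x : grad (lse_fun t W a) x = softmax_approx t W a x.
Proof.
apply/rowP => k; rewrite /grad mxE (derive_val (is_derive := is_derive_lse x (delta_mx ord0 k))).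
rewrite /softmax_approx /expsum /logit -rowE.
set z := x *m W^T + a.
have Sz : \sum_(l < n) expR (t * z ord0 l) != 0.
  by move: (expsum_gt0 x); rewrite /expsum /logit -/z => /lt0r_neq0.
rewrite [RHS]mxE !mulr_sumr; apply: eq_bigr => i _.
rewrite [row _ _ _ _]mxE [W^T _ _]mxE !mxE.
under [X in _ = _ / X * _]eq_bigr do rewrite mxE.
by field; rewrite Sz gt_eqF.
Qed.

Lemma convex_lse : convex_on setT (lse_fun t W a).
Proof.
move=> x y _ _ l /andP[l0 l1]; rewrite !lse_funE.
set Sx := expsum x; set Sy := expsum y.
have Sx0 : 0 < Sx := expsum_gt0 x; have Sy0 : 0 < Sy := expsum_gt0 y.
set C := expR (l * ln Sx + (1 - l) * ln Sy).
have C0 : 0 < C := expR_gt0 _.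
have term i : expR (t * logit i (l *: x + (1 - l) *: y)) <=
    (l * (expR (t * logit i x) / Sx) + (1 - l) * (expR (t * logit i y) / Sy)) * C.
  rewrite logit_convex_comb.
  have -> : t * (l * logit i x + (1 - l) * logit i y) =
    (l * (t * logit i x - ln Sx) + (1 - l) * (t * logit i y - ln Sy))
    + (l * ln Sx + (1 - l) * ln Sy) by ring.
  rewrite expRD ler_pM2r //.
  have := convex_expR (Itv01 l0 l1) (t * logit i x - ln Sx) (t * logit i y - ln Sy).
  rewrite !convRE => /le_trans; apply.
  by rewrite !expRD !expRN !lnK ?posrE.
have S_le : expsum (l *: x + (1 - l) *: y) <= C.
  apply: le_trans (ler_sum _ (fun i _ => term i)) _.
  rewrite -mulr_suml big_split /= -!mulr_sumr -!mulr_suml -/Sx -/Sy.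
  by rewrite !divff ?gt_eqF // !mulr1 subrKC mul1r.
have : ln (expsum (l *: x + (1 - l) *: y)) <= l * ln Sx + (1 - l) * ln Sy.
  by rewrite -[leRHS]expRK -/C ler_ln ?posrE // expsum_gt0.
have ti : 0 <= t^-1 by rewrite invr_ge0 ltW.
by move=> /(ler_wpM2l ti); rewrite mulrDr; lra.
Qed.

End LogSumExp.

Theorem theorem1 (R : realType) (d : nat) (delta : R) (F : 'rV[R]_d -> R) :
  (0 < d)%N -> 0 < delta ->
  convex_on (ccube (d:=d) (- delta) (1 + delta)) F ->
  {within ccube (d:=d) (- delta) (1 + delta), continuous F} ->
  (forall x, ocube (d:=d) (- delta) (1 + delta) x -> differentiable F x) ->
  {in ocube (d:=d) (- delta) (1 + delta), continuous (grad F)} ->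
  (forall eps : R, 0 < eps ->
     exists (n : nat) (t : R) (W : 'M[R]_(n, d)) (a : 'rV[R]_n),
       (0 < n)%N /\ 0 < t /\
       exists2 s : R, s < eps &
         forall x, ccube (d:=d) 0 1 x -> enorm (grad F x - softmax_approx t W a x) <= s)
  /\
  (forall (n : nat) (t : R) (W : 'M[R]_(n, d)) (a : 'rV[R]_n),
     (0 < n)%N -> 0 < t ->
     convex_on setT (lse_fun t W a) /\
     forall x, differentiable (lse_fun t W a) x /\
               grad (lse_fun t W a) x = softmax_approx t W a x).
Proof.
move=> _ delta_gt0 F_convex _ F_diff G_cont; split.
  exact: grad_softmax_approx delta_gt0 F_convex F_diff G_cont.
move=> n t W a n_gt0 t_gt0; split; first exact: convex_lse.
by move=> x; split; [exact: differentiable_lse | exact: grad_lse].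
Qed.
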